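(* Let $k\geq 2$. Then $(\psi_k,\mathbf{d}_k)$ is a $2$-dimensional catalytic embedding from the set of unitary matrices with entries in $\mathcal{R}_{3\cdot 2^k}$ to the set of unitary matrices with entries in $\mathcal{R}_{3\cdot 2^{k-1}}$.
   Context: $\zeta_n=e^{2\pi i/n}$ and $\mathcal{R}_n$ is the smallest subring of $\mathbb{C}$ containing $1/2$ and $\zeta_n$. Every matrix $M$ with entries in $\mathcal{R}_{3\cdot 2^k}$ can be uniquely written as $M=A+B\zeta_{3\cdot2^k}$ with $A,B$ matrices over $\mathcal{R}_{3\cdot 2^{k-1}}$; define $\psi_k(M)=A\otimes I_2+B\otimes\Gamma_k$ with $\Gamma_k=\begin{bmatrix}0&1\\ \zeta_{3\cdot 2^{k-1}}&0\end{bmatrix}$, and $\mathbf{d}_k=\frac{1}{\sqrt2}\begin{bmatrix}1\\ \zeta_{3\cdot2^k}\end{bmatrix}$. For sets of unitary matrices $\mathcal{U},\mathcal{V}$, an $m$-dimensional catalytic embedding from $\mathcal{U}$ into $\mathcal{V}$ is a pair $(\phi,\mathbf{c})$ with $\phi:\mathcal{U}\to\mathcal{V}$ a function and $\mathbf{c}\in\mathbb{C}^m$ a unit vector such that (1) if $U\in\mathcal{U}$ has dimension $d$ then $\phi(U)$ has dimension $md$, and (2) $\phi(U)(\mathbf{u}\otimes\mathbf{c})=(U\mathbf{u})\otimes\mathbf{c}$ for all $\mathbf{u}\in\mathbb{C}^d$. *)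

From HB Require Import structures.
From mathcomp Require Import all_boot all_order all_algebra.
From mathcomp Require Import complex mxtens.
From mathcomp Require Import reals trigo.
From Stdlib Require Import ClassicalEpsilon.

Set Implicit Arguments.
Unset Strict Implicit.
Unset Printing Implicit Defensive.

Import Order.TTheory GRing.Theory Num.Theory.
Local Open Scope ring_scope.

Section Defs.
Variable R : realType.
Local Notation C := R[i].

Definition zeta (n : nat) : C :=
  Complex (cos (2 * pi / n%:R)) (sin (2 * pi / n%:R)).

(* x \in R_n : x lies in every subring of C containing 1/2 and zeta_n,
   i.e. in the smallest such subring. *)
Definition in_Rn (n : nat) (x : C) : Prop :=
  forall S : {pred C}, subring_closed S -> 2^-1 \in S -> zeta n \in S -> x \in S.

Definition mx_over (n : nat) {p q : nat} (M : 'M[C]_(p, q)) : Prop :=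
  forall i j, in_Rn n (M i j).

Definition adjmx {p q : nat} (M : 'M[C]_(p, q)) : 'M[C]_(q, p) :=
  (map_mx (fun x : C => x^*) M)^T.

Definition unitary {d : nat} (M : 'M[C]_d) : Prop :=
  M *m adjmx M = 1%:M /\ adjmx M *m M = 1%:M.

Definition unit_vector {m : nat} (c : 'cV[C]_m) : Prop :=
  \sum_(i < m) `|c i 0| ^+ 2 = 1.

(* m-dimensional catalytic embedding (phi, c) from the family U into V:
   U, V are sets of unitary matrices of every dimension d (given as
   predicates indexed by d); phi maps a d-dimensional matrix to an
   (m*d)-dimensional one (the index d*m with the Kronecker convention
   'M_d (x) 'M_m). *)
Definition catalytic_embedding (m : nat)
    (U V : forall d : nat, 'M[C]_d -> Prop)
    (phi : forall d : nat, 'M[C]_d -> 'M[C]_(d * m)) (c : 'cV[C]_m) : Prop :=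
  unit_vector c /\
  forall (d : nat) (M : 'M[C]_d), U d M ->
    V (d * m)%N (phi d M) /\
    forall u : 'cV[C]_d, phi d M *m (u *t c) = (M *m u) *t c.

(* the unique decomposition M = A + B zeta_{3 2^k} with A, B over R_{3 2^(k-1)}
   (chosen by Hilbert's epsilon; any default if no decomposition exists) *)
Definition decomp (k : nat) {d : nat} (M : 'M[C]_d) : 'M[C]_d * 'M[C]_d :=
  epsilon (inhabits (0, 0))
    (fun AB : 'M[C]_d * 'M[C]_d =>
       [/\ mx_over (3 * 2 ^ (k - 1)) AB.1, mx_over (3 * 2 ^ (k - 1)) AB.2
         & M = AB.1 + zeta (3 * 2 ^ k) *: AB.2]).

Definition Gamma (k : nat) : 'M[C]_2 :=
  \matrix_(i < 2, j < 2)
    (if ((i : nat) == 0%N) && ((j : nat) == 1%N) then 1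
     else if ((i : nat) == 1%N) && ((j : nat) == 0%N) then zeta (3 * 2 ^ (k - 1))
     else 0).

Definition psi (k : nat) (d : nat) (M : 'M[C]_d) : 'M[C]_(d * 2) :=
  (decomp k M).1 *t (1%:M : 'M[C]_2) + (decomp k M).2 *t Gamma k.

Definition dvec (k : nat) : 'cV[C]_2 :=
  (sqrtC 2)^-1 *: \col_(i < 2) (if (i : nat) == 0%N then 1 else zeta (3 * 2 ^ k)).

Definition unitaries_over (n : nat) (d : nat) (M : 'M[C]_d) : Prop :=
  unitary M /\ mx_over n M.

End Defs.

Arguments catalytic_embedding {R} m U V phi c.

(* Write zn for zeta_(3 2^k) and zm = zn ^+ 2 for zeta_(3 2^(k-1)).  Every
   x in R_(3 2^k) is a + zn b with a, b in R_(3 2^(k-1)), and a, b are unique: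
   elements of R_(3 2^(k-1)) are rational polynomials in zn ^+ 2, hence take
   the same value at zn and at -zn, and since 4 divides 3 2^k, -zn is again a
   primitive root, i.e. a conjugate of zn over Q (irreducibility of the
   cyclotomic polynomial).  As Gamma_k ^+ 2 = zm, the coefficients of
   A + zn B and of psi_k = A (x) I + B (x) Gamma_k multiply by the same rule,
   and psi_k is compatible with adjoints, so uniqueness turns M M^* = 1 into
   psi_k(M) psi_k(M)^* = 1.  Finally Gamma_k d_k = zn d_k, which gives the
   catalytic identity. *)

From HB Require Import structures.
From mathcomp Require Import all_boot all_order all_algebra.
From mathcomp Require Import complex mxtens.
From mathcomp Require Import reals trigo.
From mathcomp Require Import algC cyclotomic boolp ring lra.
From Stdlib Require Import ClassicalEpsilon.

Set Implicit Arguments.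
Unset Strict Implicit.
Unset Printing Implicit Defensive.

Import Order.TTheory GRing.Theory Num.Theory.
Local Open Scope ring_scope.

Lemma map_ratr_intr_poly (F : numFieldType) (p : {poly int}) :
  map_poly (ratr : rat -> F) (map_poly intr p) = map_poly intr p.
Proof. by rewrite -map_poly_comp; apply: eq_map_poly => a /=; rewrite ratr_int. Qed.

Lemma Cyclotomic_root (F : fieldType) n (w : F) :
  n.-primitive_root w -> root (map_poly intr 'Phi_n) w.
Proof.
move=> w_prim; have n_gt0 := prim_order_gt0 w_prim.
pose PhiF d := map_poly (intr : int -> F) 'Phi_d.
have XnsubE d : (0 < d)%N -> \prod_(e <- divisors d) PhiF e = 'X^d - 1.
  by move=> d_gt0; rewrite -rmorph_prod prod_Cyclotomic // rmorphB rmorph1 /= map_polyXn.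
have : root (\prod_(e <- divisors n) PhiF e) w.
  by rewrite XnsubE // /root !hornerE prim_expr_order // subrr.
rewrite -[root _ w]negbK -(big_map PhiF xpredT idfun) root_bigmul -has_predC.
case/hasP=> ? /mapP[d]; rewrite -dvdn_divisors // => d_dvd_n -> /negPn Phi_d_w.
have d_gt0 : (0 < d)%N := dvdn_gt0 n_gt0 d_dvd_n.
have : root ('X^d - 1) w.
  by rewrite -XnsubE // (big_rem d) ?rootM ?Phi_d_w // -dvdn_divisors.
rewrite /root !hornerE subr_eq0 -(prim_order_dvd w_prim) => n_dvd_d.
by have /eqP <- : d == n by rewrite eqn_dvd d_dvd_n.
Qed.

Lemma Cyclotomic_rat_irreducible n : (0 < n)%N ->
  irreducible_poly (map_poly intr 'Phi_n : {poly rat}).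
Proof.
move=> n_gt0; have [z z_prim] := C_prim_root_exists n_gt0.
have [p [p_min p_monic] p_dvd] := minCpolyP z.
have -> : map_poly intr 'Phi_n = p.
  apply: (@map_poly_inj _ _ (ratr : {rmorphism rat -> algC})).
  rewrite map_ratr_intr_poly -p_min (minCpoly_cyclotomic z_prim).
  exact: Cintr_Cyclotomic.
split=> [|q q_size q_dvd_p].
  by rewrite -(size_map_poly (ratr : {rmorphism rat -> algC})) -p_min size_minCpoly.
have /dvdpP[h p_eq] := q_dvd_p.
have h_neq0 : h != 0.
  by move: (monic_neq0 p_monic); apply: contraNneq => h0; rewrite p_eq h0 mul0r.
have : root (map_poly ratr (h * q)) z by rewrite -p_eq p_dvd.
rewrite rmorphM rootM !p_dvd => /orP[p_dvd_h | p_dvd_q]; last by rewrite /eqp q_dvd_p.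
by rewrite p_eq -{2}[h]mulr1 dvdp_mul2l // dvdp1 (negbTE q_size) in p_dvd_h.
Qed.

Lemma Cyclotomic_rat_dvdp (F : numFieldType) n (w : F) (P : {poly rat}) :
  n.-primitive_root w -> root (map_poly ratr P) w -> map_poly intr 'Phi_n %| P.
Proof.
move=> w_prim Pw; have n_gt0 := prim_order_gt0 w_prim.
have Phi_irr := Cyclotomic_rat_irreducible n_gt0.
set g := gcdp P (map_poly intr 'Phi_n).
have g_w : root (map_poly ratr g) w.
  by rewrite gcdp_map root_gcd Pw map_ratr_intr_poly Cyclotomic_root.
have g_size : size g != 1.
  have g_neq0 : g != 0 by rewrite gcdp_eq0 negb_and (irredp_neq0 Phi_irr) orbT.
  rewrite -(size_map_poly (ratr : {rmorphism rat -> F})) gtn_eqF //.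
  by apply: root_size_gt1 g_w; rewrite map_poly_eq0.
by rewrite -(eqp_dvdl _ (Phi_irr g g_size (dvdp_gcdr _ _))) dvdp_gcdl.
Qed.

Section Cis.
Variable R : realType.
Implicit Types (x y : R).

Definition cis x : R[i] := Complex (cos x) (sin x).

Lemma cis0 : cis 0 = 1.
Proof. by rewrite /cis cos0 sin0. Qed.

Lemma cisD x y : cis (x + y) = cis x * cis y.
Proof. by rewrite /cis cosD sinD [sin x * _ + _]addrC. Qed.

Lemma cis_exprn x j : cis x ^+ j = cis (x *+ j).
Proof.
elim: j => [|j IHj]; first by rewrite mulr0n cis0.
by rewrite exprS IHj -cisD mulrS.
Qed.

Lemma cis_conj x : (cis x)^* = cis (- x).
Proof. by rewrite /cis cosN sinN. Qed.

Lemma cis_mul_conj x : cis x * (cis x)^* = 1.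
Proof. by rewrite cis_conj -cisD subrr cis0. Qed.

Lemma cos_lt1 x : 0 < x < pi *+ 2 -> cos x < 1.
Proof.
case/andP=> x_gt0 x_lt2pi; have -> : x = (x / 2) *+ 2 by rewrite mulr2n -splitr.
have : 0 < sin (x / 2).
  by apply: sin_gt0_pi; rewrite divr_gt0 //= ltr_pdivrMr // mulr_natr.
move=> /(exprn_gt0 2); rewrite cos_mulr2n cos2sin2; lra.
Qed.

Lemma zetaE n : zeta R n = cis (2 * pi / n%:R).
Proof. by []. Qed.

Lemma zeta_mul_conj n : zeta R n * (zeta R n)^* = 1.
Proof. exact: cis_mul_conj. Qed.

Lemma zeta_double_sqr n : (0 < n)%N -> zeta R (2 * n) ^+ 2 = zeta R n.
Proof.
move=> n_gt0; rewrite !zetaE cis_exprn natrM; congr cis.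
by rewrite mulr2n; field; rewrite pnatr_eq0 -lt0n.
Qed.

Lemma zeta_prim_root n : (0 < n)%N -> n.-primitive_root (zeta R n).
Proof.
move=> n_gt0; apply/andP; split => //; apply/forallP => i; apply/eqP.
rewrite unity_rootE zetaE cis_exprn.
have -> : (2 * pi / n%:R) *+ i.+1 = pi *+ 2 * (i.+1%:R / n%:R) :> R.
  by rewrite -mulr_natr mulr2n; field; rewrite pnatr_eq0 -lt0n.
have [-> | i_neq_n] := eqVneq i.+1 n.
  by rewrite divff ?pnatr_eq0 -?lt0n // mulr1 /cis cos2pi sin2pi eqxx.
have i_lt_n : (i.+1 < n)%N by rewrite ltn_neqAle i_neq_n ltn_ord.
have x_range : 0 < (pi : R) *+ 2 * (i.+1%:R / n%:R) < pi *+ 2.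
  have pi2_gt0 : 0 < pi *+ 2 :> R by rewrite pmulrn_lgt0 ?pi_gt0.
  rewrite mulr_gt0 ?divr_gt0 ?ltr0n //= gtr_pMr //.
  by rewrite ltr_pdivrMr ?ltr0n // mul1r ltr_nat.
apply/negbTE/eqP => /(congr1 (@complex.Re R)) /= cos_eq1.
by have := cos_lt1 x_range; rewrite cos_eq1 ltxx.
Qed.

End Cis.

Section SmallestSubring.
Variables (R : realType) (n : nat).
Local Notation C := R[i].

Definition Rn : {pred C} := fun x => `[< in_Rn n x >].

Lemma in_RnP (x : C) : reflect (in_Rn n x) (x \in Rn).
Proof. exact: asboolP. Qed.

Lemma Rn_min (S : {pred C}) :
  subring_closed S -> 2^-1 \in S -> zeta R n \in S -> {subset Rn <= S}.
Proof. by move=> S_subring S_half S_zeta x /in_RnP; apply. Qed.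

Lemma Rn_subring_closed : subring_closed Rn.
Proof.
split=> [|x y Rx Ry|x y Rx Ry]; apply/in_RnP => S S_subring S_half S_zeta;
  have [S1 SB SM] := S_subring; rewrite ?S1 ?SB ?SM //; exact: Rn_min.
Qed.

HB.instance Definition _ := GRing.isSubringClosed.Build C Rn Rn_subring_closed.

Lemma Rn_half : 2^-1 \in Rn.
Proof. by apply/in_RnP. Qed.

Lemma Rn_zeta : zeta R n \in Rn.
Proof. by apply/in_RnP. Qed.

Lemma Rn_conj x : (0 < n)%N -> x \in Rn -> x^* \in Rn.
Proof.
move=> n_gt0 Rx; pose S := [pred y : C | y^* \in Rn].
have S_subring : subring_closed S.
  split=> [|y z|y z]; rewrite !inE ?rmorph1 ?rpred1 // => Sy Sz.
    by rewrite rmorphB rpredB.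
  by rewrite rmorphM rpredM.
suff : x \in S by rewrite inE.
apply: (Rn_min S_subring) Rx; rewrite inE.
  by rewrite fmorphV rmorph_nat Rn_half.
have zeta_conj : (zeta R n)^* = zeta R n ^+ n.-1.
  have zeta_prim := zeta_prim_root R n_gt0.
  have zeta_neq0 : zeta R n != 0 by rewrite (prim_root_eq0 zeta_prim) -lt0n.
  apply: (mulfI zeta_neq0).
  by rewrite zeta_mul_conj -exprS prednK // prim_expr_order.
by rewrite zeta_conj rpredX // Rn_zeta.
Qed.

Lemma mx_overP d1 d2 (M : 'M[C]_(d1, d2)) : mx_over n M <-> M \is a mxOver Rn.
Proof.
split=> [M_over|/mxOverP M_over i j]; last exact/in_RnP.
by apply/mxOverP => i j; apply/in_RnP.
Qed.

End SmallestSubring.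

Lemma prim_root_opp (F : idomainType) m (w : F) :
  ~~ odd m -> (2 * m).-primitive_root w -> (2 * m).-primitive_root (- w).
Proof.
move=> m_even w_prim.
have m_gt0 : (0 < m)%N by have := prim_order_gt0 w_prim; rewrite muln_gt0.
have w_m : w ^+ m = -1.
  have : (w ^+ m) ^+ 2 == 1 by rewrite -exprM mulnC prim_expr_order.
  by rewrite sqrf_eq1 -(prim_order_dvd w_prim) gtnNdvd ?ltn_Pmull //= => /eqP.
have -> : - w = w ^+ m.+1 by rewrite exprSr w_m mulN1r.
by rewrite prim_root_exp_coprime // coprimeMr coprimen2 /= m_even coprimeSn.
Qed.

Section TensorMx.
Variable T : comPzRingType.

Lemma tensmxDl m1 n1 m2 n2 (A B : 'M[T]_(m1, n1)) (D : 'M[T]_(m2, n2)) :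
  (A + B) *t D = A *t D + B *t D.
Proof. by apply/matrixP => i j; rewrite !mxE mulrDl. Qed.

Lemma tensmxZl m1 n1 m2 n2 (x : T) (A : 'M[T]_(m1, n1)) (D : 'M[T]_(m2, n2)) :
  (x *: A) *t D = x *: (A *t D).
Proof. by apply/matrixP => i j; rewrite !mxE mulrA. Qed.

Lemma tensmxZr m1 n1 m2 n2 (x : T) (A : 'M[T]_(m1, n1)) (D : 'M[T]_(m2, n2)) :
  A *t (x *: D) = x *: (A *t D).
Proof. by apply/matrixP => i j; rewrite !mxE mulrCA. Qed.

Lemma tensmx11 m1 m2 : (1%:M : 'M[T]_m1) *t (1%:M : 'M[T]_m2) = 1%:M.
Proof.
apply/matrixP => i j.
case: (mxtens_indexP i) => i1 i2; case: (mxtens_indexP j) => j1 j2.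
rewrite tensmxE !mxE (can_eq (@mxtens_indexK _ _)) xpair_eqE.
by case: (i1 == j1); case: (i2 == j2); rewrite ?mulr1 ?mulr0.
Qed.

Lemma mxOver_tens (S : mulrClosed T) m1 n1 m2 n2
    (A : 'M[T]_(m1, n1)) (D : 'M[T]_(m2, n2)) :
  A \is a mxOver S -> D \is a mxOver S -> A *t D \is a mxOver S.
Proof. by move=> /mxOverP SA /mxOverP SD; apply/mxOverP => i j; rewrite mxE rpredM. Qed.

Lemma mulmx_scale_pair p q r (z : T) (A B : 'M[T]_(p, q)) (A' B' : 'M[T]_(q, r)) :
  (A + z *: B) *m (A' + z *: B') =
  (A *m A' + z ^+ 2 *: (B *m B')) + z *: (A *m B' + B *m A').
Proof.
rewrite mulmxDl !mulmxDr -!scalemxAl -!scalemxAr scalerA -expr2.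
by rewrite scalerDr [z *: (B *m A') + _]addrC addrACA.
Qed.

End TensorMx.

Section Adjoint.
Variable R : realType.
Local Notation C := R[i].

Lemma adjmxD m1 n1 (A B : 'M[C]_(m1, n1)) : adjmx (A + B) = adjmx A + adjmx B.
Proof. by apply/matrixP => i j; rewrite !mxE rmorphD. Qed.

Lemma adjmxZ m1 n1 (x : C) (A : 'M[C]_(m1, n1)) : adjmx (x *: A) = x^* *: adjmx A.
Proof. by apply/matrixP => i j; rewrite !mxE rmorphM. Qed.

Lemma adjmx1 m1 : adjmx (1%:M : 'M[C]_m1) = 1%:M.
Proof. by apply/matrixP => i j; rewrite !mxE eq_sym rmorph_nat. Qed.

Lemma adjmx_tens m1 n1 m2 n2 (A : 'M[C]_(m1, n1)) (D : 'M[C]_(m2, n2)) :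
  adjmx (A *t D) = adjmx A *t adjmx D.
Proof. by apply/matrixP => i j; rewrite !mxE rmorphM. Qed.

Lemma mxOver_adj n m1 n1 (A : 'M[C]_(m1, n1)) : (0 < n)%N ->
  A \is a mxOver (Rn n) -> adjmx A \is a mxOver (Rn n).
Proof. by move=> n_gt0 /mxOverP RA; apply/mxOverP => i j; rewrite !mxE Rn_conj. Qed.

End Adjoint.

Section QuadraticExtension.
Variables (R : realType) (n m : nat).
Hypotheses (n_double : n = (2 * m)%N) (m_gt0 : (0 < m)%N) (m_even : ~~ odd m).
Local Notation C := R[i].
Local Notation zn := (zeta R n).
Local Notation zm := (zeta R m).

Lemma zeta_sqr : zn ^+ 2 = zm.
Proof. by rewrite n_double zeta_double_sqr. Qed.

Lemma zeta_prim : n.-primitive_root zn.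
Proof. by apply: zeta_prim_root; rewrite n_double muln_gt0. Qed.

Lemma opp_zeta_prim : n.-primitive_root (- zn).
Proof. by move: zeta_prim; rewrite n_double; apply: prim_root_opp. Qed.

Lemma Rm_even_poly (x : C) : x \in Rn m ->
  exists p : {poly rat}, (map_poly ratr p).[zn] = x /\ (map_poly ratr p).[- zn] = x.
Proof.
pose S := [pred y : C | `[< exists p : {poly rat},
  (map_poly ratr p).[zn] = y /\ (map_poly ratr p).[- zn] = y >]].
have S_subring : subring_closed S.
  split=> [|y z|y z]; rewrite !inE.
  - by apply/asboolP; exists 1; rewrite rmorph1 !hornerC.
  - move=> /asboolP[p [p_zn p_Nzn]] /asboolP[q [q_zn q_Nzn]]; apply/asboolP.
    by exists (p - q); rewrite rmorphB !hornerD !hornerN p_zn p_Nzn q_zn q_Nzn.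
  - move=> /asboolP[p [p_zn p_Nzn]] /asboolP[q [q_zn q_Nzn]]; apply/asboolP.
    by exists (p * q); rewrite rmorphM !hornerM p_zn p_Nzn q_zn q_Nzn.
move=> Rx; suff : x \in S by rewrite inE => /asboolP.
apply: (Rn_min S_subring) Rx; rewrite inE; apply/asboolP.
  by exists (2^-1)%:P; rewrite map_polyC !hornerC /= fmorphV rmorph_nat.
by exists 'X^2; rewrite map_polyXn !hornerXn sqrrN zeta_sqr.
Qed.

Lemma Rm_zeta_free (a b : C) :
  a \in Rn m -> b \in Rn m -> a + zn * b = 0 -> a = 0 /\ b = 0.
Proof.
move=> /Rm_even_poly[p [p_zn p_Nzn]] /Rm_even_poly[q [q_zn q_Nzn]] ab0.
have P_root (w : C) : root (map_poly ratr (p + 'X * q)) w =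
    ((map_poly ratr p).[w] + w * (map_poly ratr q).[w] == 0).
  by rewrite /root rmorphD rmorphM /= map_polyX !hornerE.
have /dvdpP[r P_eq] : map_poly intr 'Phi_n %| p + 'X * q.
  by apply: (Cyclotomic_rat_dvdp zeta_prim); rewrite P_root p_zn q_zn ab0.
have : root (map_poly ratr (p + 'X * q)) (- zn).
  rewrite P_eq rmorphM rootM /= map_ratr_intr_poly.
  by rewrite Cyclotomic_root ?orbT ?opp_zeta_prim.
rewrite P_root p_Nzn q_Nzn mulNr => /eqP aNb0.
have zn_neq0 : zn != 0 by rewrite (prim_root_eq0 zeta_prim) n_double muln_eq0 -lt0n m_gt0.
have : zn * b *+ 2 = 0.
  have -> : zn * b *+ 2 = (a + zn * b) - (a - zn * b) by ring.
  by rewrite ab0 aNb0 subrr.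
move/eqP; rewrite mulrn_eq0 mulf_eq0 (negbTE zn_neq0) /= => /eqP b0.
by split=> //; rewrite b0 mulr0 addr0 in ab0.
Qed.

Lemma Rn_decomp (x : C) : x \in Rn n ->
  exists a b, [/\ a \in Rn m, b \in Rn m & x = a + zn * b].
Proof.
pose S := [pred y : C | `[< exists a b, [/\ a \in Rn m, b \in Rn m & y = a + zn * b] >]].
have S_subring : subring_closed S.
  split=> [|y z|y z]; rewrite !inE.
  - by apply/asboolP; exists 1, 0; rewrite rpred1 rpred0 mulr0 addr0.
  - move=> /asboolP[a [b [Ra Rb ->]]] /asboolP[c [d [Rc Rd ->]]]; apply/asboolP.
    by exists (a - c), (b - d); rewrite !rpredB // mulrBr opprD addrACA.
  - move=> /asboolP[a [b [Ra Rb ->]]] /asboolP[c [d [Rc Rd ->]]]; apply/asboolP.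
    exists (a * c + zm * (b * d)), (a * d + b * c).
    by rewrite !(rpredD, rpredM) ?Rn_zeta // -zeta_sqr; split=> //; ring.
move=> Rx; suff : x \in S by rewrite inE => /asboolP.
apply: (Rn_min S_subring) Rx; rewrite inE; apply/asboolP.
  by exists 2^-1, 0; rewrite Rn_half rpred0 mulr0 addr0.
by exists 0, 1; rewrite rpred0 rpred1 mulr1 add0r.
Qed.

Lemma mx_zeta_inj d1 d2 (A B A' B' : 'M[C]_(d1, d2)) :
    A \is a mxOver (Rn m) -> B \is a mxOver (Rn m) ->
    A' \is a mxOver (Rn m) -> B' \is a mxOver (Rn m) ->
  A + zn *: B = A' + zn *: B' -> A = A' /\ B = B'.
Proof.
move=> /mxOverP RA /mxOverP RB /mxOverP RA' /mxOverP RB' AB_eq.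
suff AB_eqij i j : A i j = A' i j /\ B i j = B' i j.
  by split; apply/matrixP => i j; case: (AB_eqij i j).
have := congr1 (fun M : 'M[C]_(d1, d2) => M i j) AB_eq; rewrite /= !mxE => AB_eqij.
have [] := Rm_zeta_free (rpredB (RA i j) (RA' i j)) (rpredB (RB i j) (RB' i j)).
  by rewrite mulrBr addrACA -opprD AB_eqij subrr.
by move=> /subr0_eq -> /subr0_eq ->.
Qed.

Lemma mx_decomp d1 d2 (M : 'M[C]_(d1, d2)) : M \is a mxOver (Rn n) ->
  exists A B, [/\ A \is a mxOver (Rn m), B \is a mxOver (Rn m) & M = A + zn *: B].
Proof.
move=> /mxOverP RM.
have /fin_all_exists[f f_spec] (ij : 'I_d1 * 'I_d2) : exists ab : C * C,
    [/\ ab.1 \in Rn m, ab.2 \in Rn m & M ij.1 ij.2 = ab.1 + zn * ab.2].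
  by have [a [b [Ra Rb Mij]]] := Rn_decomp (RM ij.1 ij.2); exists (a, b).
exists (\matrix_(i, j) (f (i, j)).1), (\matrix_(i, j) (f (i, j)).2).
split; try by apply/mxOverP => i j; rewrite mxE; case: (f_spec (i, j)).
by apply/matrixP => i j; rewrite !mxE; case: (f_spec (i, j)).
Qed.

Lemma adjmx_zeta_pair d1 d2 (A B : 'M[C]_(d1, d2)) :
  adjmx (A + zn *: B) = adjmx A + zn *: (zm^* *: adjmx B).
Proof.
have zn_conj : zn^* = zn * zm^*.
  by rewrite -zeta_sqr expr2 rmorphM mulrA zeta_mul_conj mul1r.
by rewrite adjmxD adjmxZ scalerA zn_conj.
Qed.

Section Lift.
Variables (e : nat) (G : 'M[C]_e).
Hypotheses (G_sqr : G *m G = zm%:M) (G_adj : adjmx G = zm^* *: G).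
Hypothesis G_over : G \is a mxOver (Rn m).

Definition lift d (A B : 'M[C]_d) : 'M[C]_(d * e) := A *t 1%:M + B *t G.

Lemma lift_mul d (A B A' B' : 'M[C]_d) :
  lift A B *m lift A' B' = lift (A *m A' + zm *: (B *m B')) (A *m B' + B *m A').
Proof.
rewrite /lift mulmxDl !mulmxDr !tensmx_mul !mul1mx !mulmx1 G_sqr -[zm%:M]scalemx1.
rewrite tensmxZr !tensmxDl tensmxZl -!addrA; congr (_ + _).
by rewrite [RHS]addrC -addrA.
Qed.

Lemma lift_adj d (A B : 'M[C]_d) : adjmx (lift A B) = lift (adjmx A) (zm^* *: adjmx B).
Proof. by rewrite /lift adjmxD !adjmx_tens adjmx1 G_adj tensmxZr tensmxZl. Qed.

Lemma lift_over d (A B : 'M[C]_d) :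
  A \is a mxOver (Rn m) -> B \is a mxOver (Rn m) -> lift A B \is a mxOver (Rn m).
Proof. by move=> RA RB; rewrite rpredD ?mxOver_tens ?mxOver_scalar ?rpred0 ?rpred1. Qed.

Lemma lift_tens d (c : 'cV[C]_e) (A B : 'M[C]_d) (u : 'cV[C]_d) :
  G *m c = zn *: c -> lift A B *m (u *t c) = ((A + zn *: B) *m u) *t c.
Proof.
move=> Gc; rewrite mulmxDl !tensmx_mul mul1mx Gc tensmxZr -tensmxZl -tensmxDl.
by rewrite mulmxDl -scalemxAl.
Qed.

Lemma lift_mul_eq1 d (A B A' B' : 'M[C]_d) :
    A \is a mxOver (Rn m) -> B \is a mxOver (Rn m) ->
    A' \is a mxOver (Rn m) -> B' \is a mxOver (Rn m) ->
  (A + zn *: B) *m (A' + zn *: B') = 1%:M -> lift A B *m lift A' B' = 1%:M.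
Proof.
move=> RA RB RA' RB'.
rewrite mulmx_scale_pair zeta_sqr -[X in _ = X]addr0 -(scaler0 _ zn).
case/mx_zeta_inj; rewrite ?mxOver_scalar ?rpred0 ?rpred1 //.
- by apply: rpredD; [apply: mxOverM|apply: mxOverZ; [apply: Rn_zeta|apply: mxOverM]].
- by apply: rpredD; apply: mxOverM.
by rewrite lift_mul => -> ->; rewrite /lift tens0mx addr0 tensmx11.
Qed.

Lemma lift_unitary d (A B : 'M[C]_d) :
    A \is a mxOver (Rn m) -> B \is a mxOver (Rn m) ->
  unitary (A + zn *: B) -> unitary (lift A B).
Proof.
move=> RA RB []; rewrite /unitary adjmx_zeta_pair lift_adj.
have RA' := mxOver_adj m_gt0 RA.
have RB' : zm^* *: adjmx B \is a mxOver (Rn m).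
  by apply: mxOverZ; [apply: Rn_conj; rewrite ?Rn_zeta|apply: mxOver_adj].
by split; apply: lift_mul_eq1.
Qed.

End Lift.
End QuadraticExtension.

Lemma three_pow2S k : (0 < k)%N -> (3 * 2 ^ k = 2 * (3 * 2 ^ (k - 1)))%N.
Proof. by case: k => // k _; rewrite subn1 expnS mulnCA. Qed.

Section GammaMatrix.
Variables (R : realType) (k : nat).
Local Notation zn := (zeta R (3 * 2 ^ k)).
Local Notation zm := (zeta R (3 * 2 ^ (k - 1))).

Lemma Gamma_sqr : Gamma R k *m Gamma R k = zm%:M.
Proof.
apply/matrixP => i j; rewrite !mxE !big_ord_recl big_ord0 !mxE /=.
by case: i => [[|[|i]]] // ?; case: j => [[|[|j]]] // ? /=;
  rewrite ?(mul0r, mulr0, mul1r, mulr1, addr0, add0r).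
Qed.

Lemma Gamma_adj : adjmx (Gamma R k) = zm^* *: Gamma R k.
Proof.
apply/matrixP => i j; rewrite !mxE /=.
by case: i => [[|[|i]]] // ?; case: j => [[|[|j]]] // ? /=;
  rewrite ?(rmorph0, rmorph1, mulr0, mulr1) // mulrC zeta_mul_conj.
Qed.

Lemma Gamma_over : Gamma R k \is a mxOver (Rn (3 * 2 ^ (k - 1))).
Proof.
apply/mxOverP => i j; rewrite mxE.
by do 2?case: ifP => _; rewrite ?rpred0 ?rpred1 ?Rn_zeta.
Qed.

Lemma dvec_unit : unit_vector (dvec R k).
Proof.
rewrite /unit_vector !big_ord_recl big_ord0 !mxE /= mulr1 addr0 normrM exprMn.
rewrite [`|zn| ^+ 2]normCK zeta_mul_conj mulr1 normfV ger0_norm ?sqrtC_ge0 //.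
by rewrite exprVn sqrtCK [RHS](splitr 1) div1r.
Qed.

Lemma Gamma_dvec : (0 < k)%N -> Gamma R k *m dvec R k = zn *: dvec R k.
Proof.
move=> k_gt0; have zn_sqr : zn ^+ 2 = zm.
  by rewrite three_pow2S // zeta_double_sqr // muln_gt0 expn_gt0.
apply/matrixP => i j; rewrite !mxE !big_ord_recl big_ord0 !mxE /=.
case: i => [[|[|i]]] // ? /=; rewrite ?(mul0r, mulr0, mul1r, mulr1, addr0, add0r).
  by rewrite mulrC.
by rewrite mulrCA -expr2 zn_sqr mulrC.
Qed.

End GammaMatrix.

Lemma decompP (R : realType) k d (M : 'M[R[i]]_d) : (0 < k)%N ->
    M \is a mxOver (Rn (3 * 2 ^ k)) ->
  [/\ (decomp k M).1 \is a mxOver (Rn (3 * 2 ^ (k - 1))),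
      (decomp k M).2 \is a mxOver (Rn (3 * 2 ^ (k - 1)))
    & M = (decomp k M).1 + zeta R (3 * 2 ^ k) *: (decomp k M).2].
Proof.
move=> k_gt0 RM; have m_gt0 : (0 < 3 * 2 ^ (k - 1))%N by rewrite muln_gt0 expn_gt0.
have [A [B [RA RB M_eq]]] := mx_decomp (three_pow2S k_gt0) m_gt0 RM.
have AB_spec : exists AB : 'M[R[i]]_d * 'M[R[i]]_d,
    [/\ mx_over (3 * 2 ^ (k - 1)) AB.1, mx_over (3 * 2 ^ (k - 1)) AB.2
      & M = AB.1 + zeta R (3 * 2 ^ k) *: AB.2].
  by exists (A, B); split=> //; apply/mx_overP.
have [RA' RB' M_eq'] := epsilon_spec (inhabits (0, 0)) _ AB_spec.
by split=> //; apply/mx_overP.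
Qed.

Lemma psiE (R : realType) k d (M : 'M[R[i]]_d) :
  psi k M = lift (Gamma R k) (decomp k M).1 (decomp k M).2.
Proof. by []. Qed.

Theorem proposition5p4 (R : realType) (k : nat) (hk : (2 <= k)%N) :
  catalytic_embedding 2%N
    (@unitaries_over R (3 * 2 ^ k)) (@unitaries_over R (3 * 2 ^ (k - 1)))
    (@psi R k) (@dvec R k).
Proof.
have k_gt0 : (0 < k)%N by apply: leq_trans hk.
have n_double := three_pow2S k_gt0.
have m_gt0 : (0 < 3 * 2 ^ (k - 1))%N by rewrite muln_gt0 expn_gt0.
have m_even : ~~ odd (3 * 2 ^ (k - 1)) by rewrite oddM oddX subn_eq0 leqNgt hk.
split; first exact: dvec_unit.
move=> d M [M_unitary /mx_overP RM].
have [RA RB M_eq] := decompP k_gt0 RM.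
rewrite psiE; split; [split|].
- rewrite M_eq in M_unitary.
  exact: (lift_unitary n_double m_gt0 m_even (Gamma_sqr R k) (Gamma_adj R k)
                       RA RB M_unitary).
- apply/mx_overP; exact: (lift_over (Gamma_over R k) RA RB).
- by move=> u; rewrite [in RHS]M_eq; apply: lift_tens; apply: Gamma_dvec.
Qed.
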